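(* Let $w\in\mathfrak{S}_n$ be right-almost-reducible at $i$ and left-almost-reducible at $j$. Then $i\ne j$ and $s_is_j=s_js_i$.
   Context: $\mathfrak{S}_n$ has simple generators $S=\{s_1,\ldots,s_{n-1}\}$, $s_i=(i\ i{+}1)$, length $\ell$. $\supp(x)$ is the set of simple generators in a reduced word of $x$; $D_L(x)=\{s:\ell(sx)<\ell(x)\}$, $D_R(x)=\{s:\ell(xs)<\ell(x)\}$. For $J\subseteq S$, $x=x^Jx_J$ is the parabolic decomposition ($x_J\in W_J=\langle J\rangle$, $x^J$ minimal length in $xW_J$); it is a BP-decomposition if $\supp(x^J)\cap J\subseteq D_L(x_J)$. $w$ is Bruhat irreducible if $\supp(w)=S$ and $w$ is not a product $w'w''$ with $w',w''\ne e$ and disjoint supports. A Bruhat irreducible $w$ is almost reducible at $(J,i)$ if $w=w^Jw_J$ is a BP-decomposition with $\supp(w^J)\cap J=\{s_i\}$ and $s_i\notin D_L(w)\cup D_R(w)$. $w$ is right-almost-reducible at $i$ if it is Bruhat irreducible and almost reducible at $(\{s_i,\ldots,s_{n-1}\},i)$, and left-almost-reducible at $j$ if it is Bruhat irreducible and almost reducible at $(\{s_1,\ldots,s_j\},j)$. *)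

(* The symmetric group S_n is {perm 'I_n}; points are 0-based,
   simple generators are 1-based: s_i swaps the points i-1 and i (1 <= i <= n-1). *)
From mathcomp Require Import all_boot all_fingroup.
Set Implicit Arguments. Unset Strict Implicit. Unset Printing Implicit Defensive.
Local Open Scope group_scope.

Definition sgen (n i : nat) : {perm 'I_n} :=
  match @insub nat (fun k => k < n) _ i.-1, @insub nat (fun k => k < n) _ i with
  | Some a, Some b => tperm a b
  | _, _ => 1
  end.

Definition is_gen (n i : nat) : Prop := (0 < i)%N /\ (i < n)%N.

Definition len (n : nat) (x : {perm 'I_n}) : nat :=
  #|[set p : 'I_n * 'I_n | (p.1 < p.2)%N && (x p.2 < x p.1)%N]|.

Definition wprod (n : nat) (w : seq nat) : {perm 'I_n} :=
  \prod_(k <- w) sgen n k.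

Definition valid_word (n : nat) (w : seq nat) : Prop :=
  forall k, k \in w -> is_gen n k.

Definition reduced_word (n : nat) (x : {perm 'I_n}) (w : seq nat) : Prop :=
  valid_word n w /\ wprod n w = x /\ size w = len x.

Definition supp (n : nat) (x : {perm 'I_n}) (k : nat) : Prop :=
  exists w, reduced_word x w /\ k \in w.

Definition DL (n : nat) (x : {perm 'I_n}) (k : nat) : Prop :=
  is_gen n k /\ (len (sgen n k * x) < len x)%N.
Definition DR (n : nat) (x : {perm 'I_n}) (k : nat) : Prop :=
  is_gen n k /\ (len (x * sgen n k) < len x)%N.

Definition in_WJ (n : nat) (J : nat -> Prop) (x : {perm 'I_n}) : Prop :=
  exists w, valid_word n w /\ (forall k, k \in w -> J k) /\ wprod n w = x.

(* x = u v is the parabolic decomposition x = x^J x_J *)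
Definition parabolic_decomp (n : nat) (J : nat -> Prop) (x u v : {perm 'I_n}) : Prop :=
  x = u * v /\ in_WJ J v /\ (forall y, in_WJ J y -> (len u <= len (x * y))%N).

Definition BP_decomp (n : nat) (J : nat -> Prop) (x u v : {perm 'I_n}) : Prop :=
  parabolic_decomp J x u v /\ (forall k, supp u k -> J k -> DL v k).

Definition bruhat_irreducible (n : nat) (w : {perm 'I_n}) : Prop :=
  (forall k, is_gen n k -> supp w k) /\
  ~ (exists w1 w2 : {perm 'I_n}, w = w1 * w2 /\ w1 <> 1 /\ w2 <> 1 /\
       (forall k, supp w1 k -> supp w2 k -> False)).

(* almost reducible at (J,i) (Bruhat irreducibility imposed separately) *)
Definition almost_reducible_at (n : nat) (w : {perm 'I_n}) (J : nat -> Prop) (i : nat) : Prop :=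
  exists u v, BP_decomp J w u v /\
    (forall k, (supp u k /\ J k) <-> k = i) /\
    ~ DL w i /\ ~ DR w i.

Definition Jright (n i : nat) (k : nat) : Prop := (i <= k)%N /\ is_gen n k.
Definition Jleft (n j : nat) (k : nat) : Prop := (k <= j)%N /\ is_gen n k.

Definition right_almost_reducible (n : nat) (w : {perm 'I_n}) (i : nat) : Prop :=
  bruhat_irreducible w /\ almost_reducible_at w (Jright n i) i.
Definition left_almost_reducible (n : nat) (w : {perm 'I_n}) (j : nat) : Prop :=
  bruhat_irreducible w /\ almost_reducible_at w (Jleft n j) j.

From mathcomp Require Import all_boot all_fingroup zify.
Set Implicit Arguments. Unset Strict Implicit. Unset Printing Implicit Defensive.
Local Open Scope group_scope.

(* Write w = u v with v in W_J and u the minimal coset representative, so that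
   u has no right descent at s_i.  For J = {s_k : k >= i} every letter of a
   reduced word of u is <= i and s_i occurs.  Cutting the word at the last
   occurrence of s_i, the prefix would acquire a descent at s_i if u fixed the
   point i (points are 0-based, s_i swaps i-1 and i); hence u moves i, and since
   u fixes every point above i and has no descent at s_i, u sends i strictly
   below i-1, where v acts trivially.  Together with s_i not in D_L(w) this gives
   w(i-1) < w(i) < i-1.  Conjugating by the reversal of the points, which maps
   s_k to s_(n-k), yields j < w(j-1) < w(j) on the other side, and these chains
   are incompatible as soon as |i - j| <= 1. *)

Lemma split_last_mem (T : eqType) (a : T) s : a \in s ->
  exists s1 s2, s = s1 ++ a :: s2 /\ a \notin s2.
Proof.
elim: s => [|b s IH] //; rewrite in_cons; case: (boolP (a \in s)) => [/IH[s1 [s2 [-> ns2]]] _|ns].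
  by exists (b :: s1), s2.
by rewrite orbF => /eqP <-; exists [::], s.
Qed.

Section SymmetricGroup.
Variable n : nat.
Implicit Types (x y : {perm 'I_n}) (r : seq nat).

Definition adjswap (k t : nat) : nat :=
  if t == k.-1 then k else if t == k then k.-1 else t.

Lemma sgenE k (p : 'I_n) :
  (sgen n k p : nat) = if (k < n)%N then adjswap k p else p.
Proof.
rewrite /sgen /adjswap; case: (ltnP k n) => [kn | nk].
- have k1n : (k.-1 < n)%N by lia.
  rewrite (insubT (fun k => k < n)%N k1n) (insubT (fun k => k < n)%N kn) /=.
  case: tpermP => [-> | -> | /eqP pa /eqP pb] /=; rewrite ?eqxx //.
  + by case: eqVneq.
  + by rewrite -!val_eqE /= in pa pb; rewrite (negbTE pa) (negbTE pb).
- rewrite (@insubF _ (fun k => k < n)%N _ k) ?ltnNge ?nk //.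
  by case: insub => [?|]; rewrite perm1.
Qed.

Lemma adjswapE k t :
  t = k.-1 /\ adjswap k t = k \/ t = k /\ t <> k.-1 /\ adjswap k t = k.-1 \/
  t <> k.-1 /\ t <> k /\ adjswap k t = t.
Proof. by rewrite /adjswap; case: eqVneq => [|/eqP]; [|case: eqVneq => [|/eqP]]; tauto. Qed.

Lemma adjswapK k : involutive (adjswap k).
Proof. by move=> t; have := adjswapE k t; have := adjswapE k (adjswap k t); lia. Qed.

Lemma sgenV k : (sgen n k)^-1 = sgen n k.
Proof.
apply/eqP; rewrite eq_invg_mul; apply/eqP/permP => p; apply: val_inj => /=.
by rewrite permM perm1 !sgenE; case: ifP => kn; rewrite ?kn ?adjswapK.
Qed.

Lemma adjswap_id k t : t <> k.-1 -> t <> k -> adjswap k t = t.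
Proof. by have := adjswapE k t; lia. Qed.

Lemma sgen_commute i j : (i.+1 < j)%N || (j.+1 < i)%N ->
  sgen n i * sgen n j = sgen n j * sgen n i.
Proof.
move=> far; apply/permP => p; apply: val_inj => /=; rewrite !permM !sgenE.
case: (i < n)%N; case: (j < n)%N => //; move: (nat_of_ord p) => t.
wlog [tj1 tj] : i j far / t <> j.-1 /\ t <> j.
  move=> sym; have [t_j | t_i] : (t <> j.-1 /\ t <> j) \/ (t <> i.-1 /\ t <> i) by lia.
  - exact: sym.
  - by symmetry; apply: sym; rewrite // orbC.
by rewrite (adjswap_id tj1 tj) adjswap_id //; have := adjswapE i t; lia.
Qed.

Lemma wprod_cons k r : wprod n (k :: r) = sgen n k * wprod n r.
Proof. by rewrite /wprod big_cons. Qed.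

Lemma wprod_cat r1 r2 : wprod n (r1 ++ r2) = wprod n r1 * wprod n r2.
Proof. by rewrite /wprod big_cat. Qed.

Lemma wprod_rcons r k : wprod n (rcons r k) = wprod n r * sgen n k.
Proof. by rewrite -cats1 wprod_cat /wprod big_seq1. Qed.

Lemma wprod_rev r : wprod n (rev r) = (wprod n r)^-1.
Proof.
elim: r => [|k r IH]; first by rewrite /wprod big_nil invg1.
by rewrite rev_cons wprod_rcons IH wprod_cons invMg sgenV.
Qed.

Lemma wprod_fix r (p : 'I_n) :
  (forall k, k \in r -> (p : nat) <> k.-1 /\ (p : nat) <> k) -> wprod n r p = p.
Proof.
elim: r => [|k r IH] away; first by rewrite /wprod big_nil perm1.
rewrite wprod_cons permM; have [pk1 pk] := away k (mem_head k r).
have -> : sgen n k p = p.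
  by apply: val_inj => /=; rewrite sgenE adjswap_id // if_same.
by apply: IH => k' k'r; apply: away; rewrite in_cons k'r orbT.
Qed.

Lemma wprod_fix_hi r m (p : 'I_n) :
  (forall k, k \in r -> k <= m)%N -> (m < p)%N -> wprod n r p = p.
Proof. by move=> le_rm mp; apply: wprod_fix => k /le_rm; lia. Qed.

Lemma wprod_fix_lo r m (p : 'I_n) :
  (forall k, k \in r -> m <= k)%N -> (p.+1 < m)%N -> wprod n r p = p.
Proof. by move=> le_mr pm; apply: wprod_fix => k /le_mr; lia. Qed.

Definition inversions x := [set p : 'I_n * 'I_n | (p.1 < p.2)%N && (x p.2 < x p.1)%N].

Lemma lenE x : len x = #|inversions x|.
Proof. by []. Qed.

Lemma len1 : len (1 : {perm 'I_n}) = 0.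
Proof.
apply/eqP; rewrite lenE cards_eq0; apply/eqP/setP => -[a b].
by rewrite !inE !perm1 /=; case: ltngtP.
Qed.

Lemma len_leq_map x y (f : 'I_n * 'I_n -> 'I_n * 'I_n) : injective f ->
  {subset [seq f p | p in inversions y] <= inversions x} -> (len y <= len x)%N.
Proof.
move=> f_inj f_inv; rewrite !lenE -(card_imset (inversions y) f_inj).
by apply: subset_leq_card; apply/subsetP => q /imsetP[p yp ->]; apply/f_inv/image_f.
Qed.

Lemma len_inv x : len x^-1 = len x.
Proof.
suff le_inv y : (len y <= len y^-1)%N by apply/eqP; rewrite eqn_leq le_inv -{2}[x]invgK le_inv.
apply: (@len_leq_map _ _ (fun p => (y p.2, y p.1))).
  by move=> [p1 p2] [q1 q2] [/perm_inj-> /perm_inj->].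
by move=> q /imageP[[p1 p2] + ->]; rewrite !inE /= => /andP[lt12 ->]; rewrite !permK lt12.
Qed.

Lemma adjswap_ltn k u v : ~ (u = k.-1 /\ v = k) -> ~ (u = k /\ v = k.-1) ->
  (adjswap k u < adjswap k v)%N = (u < v)%N.
Proof.
by move=> nuv nvu; apply/idP/idP; have := adjswapE k u; have := adjswapE k v; lia.
Qed.

Lemma len_mul_sgen x k (a b : 'I_n) : (0 < k < n)%N ->
  (x a : nat) = k.-1 -> (x b : nat) = k ->
  (len (x * sgen n k) + (b < a) = len x + (a < b))%N.
Proof.
move=> /andP[k_gt0 kn] xa xb.
have xE c d : (x c : nat) = x d -> c = d by move/val_inj/perm_inj.
set e := if (a < b)%N then (a, b) else (b, a).
have off_e : inversions (x * sgen n k) :\ e = inversions x :\ e.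
  apply/setP => -[p1 p2]; rewrite !inE /= !permM !sgenE kn.
  case: (eqVneq (p1, p2) e) => //= ne; case: ltnP => //= lt12.
  apply: adjswap_ltn; rewrite -xa -xb => -[/xE p2E /xE p1E]; move: ne; rewrite /e; subst.
    by rewrite ltnNge (ltnW lt12) eqxx.
  by rewrite lt12 eqxx.
rewrite !lenE (cardsD1 e) [in RHS](cardsD1 e) off_e /e !inE !permM !sgenE kn.
have [ab | ba | ab] := ltngtP a b; rewrite /= ?xa ?xb.
- by have := adjswapE k k; have := adjswapE k k.-1; lia.
- by have := adjswapE k k; have := adjswapE k k.-1; lia.
- by move: xa; rewrite (val_inj ab) xb; lia.
Qed.

Lemma sgen_out k : ~~ (0 < k < n)%N -> sgen n k = 1.
Proof.
move=> out; apply/permP => p; apply: val_inj => /=; rewrite sgenE perm1.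
case: ifP => // kn; move: out; rewrite kn andbT lt0n negbK => /eqP ->.
by case: p => t tn /=; have := adjswapE 0 t; lia.
Qed.

Lemma len_mul_sgen_le x k : (len (x * sgen n k) <= (len x).+1)%N.
Proof.
have [/andP[k_gt0 kn] | out] := boolP (0 < k < n)%N; last by rewrite sgen_out ?mulg1.
have k1n : (k.-1 < n)%N by lia.
have := @len_mul_sgen x k (x^-1 (Ordinal k1n)) (x^-1 (Ordinal kn)).
by rewrite !permKV k_gt0 kn => /(_ erefl erefl erefl); lia.
Qed.

Lemma len_mul_sgen_lt x k (a b : 'I_n) : (0 < k < n)%N ->
  (x a : nat) = k.-1 -> (x b : nat) = k -> (b < a)%N -> (len (x * sgen n k) < len x)%N.
Proof. by move=> kP xa xb ba; have := len_mul_sgen kP xa xb; rewrite ba ltnNge (ltnW ba); lia. Qed.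

Lemma len_mul_wprod x r : (len (x * wprod n r) <= len x + size r)%N.
Proof.
elim/last_ind: r => [|r k IH]; first by rewrite /wprod big_nil mulg1 addn0.
rewrite wprod_rcons mulgA size_rcons addnS.
exact: leq_trans (len_mul_sgen_le _ _) _.
Qed.

Lemma len_wprod r : (len (wprod n r) <= size r)%N.
Proof. by have := len_mul_wprod 1 r; rewrite mul1g len1. Qed.

Lemma reduced_prefix_ascent x r1 k r2 : reduced_word x (r1 ++ k :: r2) ->
  (len (wprod n r1) <= len (wprod n r1 * sgen n k))%N.
Proof.
case=> _ [<-]; rewrite size_cat /= -cat_rcons wprod_cat wprod_rcons => size_r.
by have := len_mul_wprod (wprod n r1 * sgen n k) r2; have := len_wprod r1; lia.
Qed.

Lemma notDL_ltn w k (p q : 'I_n) : ~ DL w k -> is_gen n k ->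
  (p : nat) = k.-1 -> (q : nat) = k -> (w p < w q)%N.
Proof.
move=> notDL [k_gt0 kn] pk qk; rewrite ltn_neqAle.
have -> /= : (w p : nat) != w q.
  by apply/eqP => /val_inj/perm_inj/(congr1 (@nat_of_ord n)); rewrite pk qk; lia.
rewrite leqNgt; apply/negP => wqp; apply: notDL; split => //.
rewrite -len_inv invMg sgenV -(len_inv w).
by apply: (len_mul_sgen_lt (a := w p) (b := w q)); rewrite ?permK ?k_gt0.
Qed.

Lemma descent_fix_above x i (q : 'I_n) : (0 < i)%N -> (q : nat) = i ->
  (forall p : 'I_n, (i < p)%N -> x p = p) -> (x q : nat) = i.-1 ->
  (len (x * sgen n i) < len x)%N.
Proof.
move=> i_gt0 qi fix_hi xq.
have xb : (x (x^-1 q) : nat) = i by rewrite permKV.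
apply: (len_mul_sgen_lt _ xq xb); first by rewrite i_gt0 -qi ltn_ord.
rewrite ltn_neqAle; apply/andP; split.
  apply/eqP => /val_inj bq; have := permKV x q; rewrite bq => xqq.
  by move: xq; rewrite xqq qi; lia.
rewrite leqNgt; apply/negP => qb.
by have := fix_hi (x^-1 q); rewrite permKV -qi => /(_ qb) bE; move: qb; rewrite -bE ltnn.
Qed.

Definition rev_perm : {perm 'I_n} := perm (@rev_ord_inj n).

Lemma rev_permE (p : 'I_n) : (rev_perm p : nat) = n - p.+1.
Proof. by rewrite permE. Qed.

Lemma rev_permK : involutive rev_perm.
Proof. by move=> p; rewrite !permE rev_ordK. Qed.

Lemma rev_permV : rev_perm^-1 = rev_perm.
Proof. by apply/eqP; rewrite eq_invg_mul; apply/eqP/permP => p; rewrite permM rev_permK perm1. Qed.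

Lemma conjg_rev_permK x : (x ^ rev_perm) ^ rev_perm = x.
Proof. by rewrite -conjgM -{1}rev_permV mulVg conjg1. Qed.

Lemma conjg_rev_permE x (p : 'I_n) : (x ^ rev_perm) p = rev_perm (x (rev_perm p)).
Proof. by rewrite conjgE !permM rev_permV. Qed.

Lemma len_conjg_rev_perm x : len (x ^ rev_perm) = len x.
Proof.
suff le_conj y : (len (y ^ rev_perm) <= len y)%N.
  apply/eqP; rewrite eqn_leq; apply/andP; split; first exact: le_conj.
  by have := le_conj (x ^ rev_perm); rewrite conjg_rev_permK.
pose f (p : 'I_n * 'I_n) := (rev_perm p.2, rev_perm p.1).
apply: (@len_leq_map _ _ f).
  by move=> [p1 p2] [q1 q2] [/perm_inj-> /perm_inj->].
move=> q /imageP[[p1 p2] + ->]; rewrite !inE /= !conjg_rev_permE !rev_permE.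
move=> /andP[lt12 lt21]; have := ltn_ord p2; have := ltn_ord (y (rev_perm p1)).
by move=> ? ?; apply/andP; split; lia.
Qed.

Lemma sgen_conjg_rev_perm k : (0 < k < n)%N -> sgen n k ^ rev_perm = sgen n (n - k).
Proof.
move=> /andP[k_gt0 kn]; apply/permP => p; apply: val_inj.
rewrite /= conjg_rev_permE rev_permE !sgenE rev_permE kn ifT; last by lia.
have := ltn_ord p; have := adjswapE k (n - p.+1); have := adjswapE (n - k) p; lia.
Qed.

Lemma wprod_conjg_rev_perm r : valid_word n r ->
  wprod n r ^ rev_perm = wprod n (map (subn n) r).
Proof.
elim: r => [|k r IH] valid; first by rewrite /wprod !big_nil conj1g.
have [k_gt0 kn] := valid k (mem_head k r).
rewrite /= !wprod_cons conjMg sgen_conjg_rev_perm ?k_gt0 // IH // => k' k'r.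
by apply: valid; rewrite in_cons k'r orbT.
Qed.

Lemma reduced_word_conjg_rev_perm x r : reduced_word x r ->
  reduced_word (x ^ rev_perm) (map (subn n) r).
Proof.
move=> [valid [xE size_r]]; split; last split.
- by move=> _ /mapP[k /valid [k_gt0 kn] ->]; split; lia.
- by rewrite -wprod_conjg_rev_perm // xE.
- by rewrite size_map len_conjg_rev_perm.
Qed.

Lemma parabolic_ascent J x u v k : parabolic_decomp J x u v -> J k -> is_gen n k ->
  (len u <= len (u * sgen n k))%N.
Proof.
case=> -> [[r [valid [Jr <-]]] minimal] Jk gen_k.
have := minimal ((wprod n r)^-1 * sgen n k); rewrite mulgA mulgK; apply.
exists (rcons (rev r) k); split; last split.
- by move=> k'; rewrite mem_rcons in_cons mem_rev => /orP[/eqP -> | /valid].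
- by move=> k'; rewrite mem_rcons in_cons mem_rev => /orP[/eqP -> | /Jr].
- by rewrite wprod_rcons wprod_rev.
Qed.

Lemma reduced_max_letter_lt x r i (q : 'I_n) : (0 < i)%N -> reduced_word x r -> i \in r ->
  (forall k, k \in r -> k <= i)%N -> (len x <= len (x * sgen n i))%N ->
  (q : nat) = i -> (x q < i.-1)%N.
Proof.
move=> i_gt0 red_r ir le_ri asc qi; have [_ [xE _]] := red_r.
have fix_hi (p : 'I_n) : (i < p)%N -> x p = p by rewrite -xE; apply: wprod_fix_hi le_ri.
have moved : x q <> q.
  move=> xqq; have [r1 [r2 [rE ir2]]] := split_last_mem ir.
  have le_r2 k : k \in r2 -> (k <= i.-1)%N.
    move=> kr2; have : k != i by apply: contraNneq ir2 => <-.
    have : (k <= i)%N by apply: le_ri; rewrite rE mem_cat in_cons kr2 !orbT.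
    lia.
  have fix_r2 : wprod n r2 q = q by apply: wprod_fix_hi le_r2 _; lia.
  have yq : (wprod n r1 q : nat) = i.-1.
    have : sgen n i (wprod n r1 q) = q.
      apply: (@perm_inj _ (wprod n r2)).
      by rewrite fix_r2 -{2}xqq -xE rE wprod_cat wprod_cons !permM.
    move=> /(congr1 (@nat_of_ord n)); rewrite sgenE qi ifT; last by rewrite -qi ltn_ord.
    by have := adjswapE i (wprod n r1 q); lia.
  have := @reduced_prefix_ascent x r1 i r2; rewrite -rE leqNgt => /(_ red_r)/negP; apply.
  apply: (descent_fix_above i_gt0 qi) yq => p ip; apply: wprod_fix_hi ip => k kr1.
  by apply: le_ri; rewrite rE mem_cat kr1.
have xq_le : (x q <= i)%N.
  by rewrite leqNgt; apply/negP => /fix_hi /perm_inj.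
have xq_i : (x q : nat) <> i by move=> xqi; apply: moved; apply: val_inj; rewrite /= xqi.
have xq_i1 : (x q : nat) <> i.-1.
  by move=> /(descent_fix_above i_gt0 qi fix_hi); rewrite ltnNge asc.
lia.
Qed.

Lemma reduced_min_letter_gt x r j (p : 'I_n) : is_gen n j -> reduced_word x r -> j \in r ->
  (forall k, k \in r -> j <= k)%N -> (len x <= len (x * sgen n j))%N ->
  (p : nat) = j.-1 -> (j < x p)%N.
Proof.
move=> [j_gt0 jn] red_r jr le_jr asc pj.
have := @reduced_max_letter_lt _ _ (n - j) (rev_perm p) _ (reduced_word_conjg_rev_perm red_r).
rewrite conjg_rev_permE rev_permK rev_permE map_f // -sgen_conjg_rev_perm ?j_gt0 //.
rewrite -conjMg !len_conjg_rev_perm asc rev_permE pj.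
have le_map k : k \in map (subn n) r -> (k <= n - j)%N by move=> /mapP[k' /le_jr ? ->]; lia.
by move=> /(_ _ erefl le_map erefl); lia.
Qed.

Lemma almost_reducible_word w J i : (forall k, J k -> is_gen n k) ->
  almost_reducible_at w J i ->
  exists u v r,
    [/\ w = u * v, in_WJ J v, reduced_word u r, i \in r & forall k, k \in r -> J k -> k = i]
    /\ [/\ J i, (len u <= len (u * sgen n i))%N & ~ DL w i].
Proof.
move=> J_gen [u [v [[decomp _] [supp_i [notDL _]]]]].
have [[r [red_r ir]] Ji] : supp u i /\ J i by apply/supp_i.
have [wE [Wv _]] := decomp; exists u, v, r; split; split => //.
- by move=> k kr Jk; apply/supp_i; split => //; exists r.
- exact: parabolic_ascent decomp Ji (J_gen i Ji).
Qed.

Lemma almost_reducible_right_ltn w i : almost_reducible_at w (Jright n i) i ->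
  is_gen n i /\ forall p q : 'I_n, (p : nat) = i.-1 -> (q : nat) = i -> (w p < w q < i.-1)%N.
Proof.
move=> /(@almost_reducible_word w (Jright n i) i (fun k => @proj2 _ _)).
move=> [u [v [r [[wE [rv [_ [Jrv vE]]] red_r ir only_i] [[_ gen_i] asc notDL]]]]].
split=> // p q pi qi; rewrite (notDL_ltn notDL gen_i pi qi) /=.
have le_ri k : k \in r -> (k <= i)%N.
  move=> kr; have [k_gt0 kn] := red_r.1 k kr; rewrite leqNgt; apply/negP => ik.
  by have := only_i k kr (conj (ltnW ik) (conj k_gt0 kn)); lia.
have uq := reduced_max_letter_lt gen_i.1 red_r ir le_ri asc qi.
have fix_v : v (u q) = u q.
  by rewrite -vE; apply: (@wprod_fix_lo _ i) => [k /Jrv[] // | ]; lia.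
by rewrite wE permM fix_v.
Qed.

Lemma almost_reducible_left_ltn w j : almost_reducible_at w (Jleft n j) j ->
  is_gen n j /\ forall p q : 'I_n, (p : nat) = j.-1 -> (q : nat) = j -> (j < w p < w q)%N.
Proof.
move=> /(@almost_reducible_word w (Jleft n j) j (fun k => @proj2 _ _)).
move=> [u [v [r [[wE [rv [_ [Jrv vE]]] red_r jr only_j] [[_ gen_j] asc notDL]]]]].
split=> // p q pj qj; rewrite (notDL_ltn notDL gen_j pj qj) andbT.
have le_jr k : k \in r -> (j <= k)%N.
  move=> kr; have [k_gt0 kn] := red_r.1 k kr; rewrite leqNgt; apply/negP => kj.
  by have := only_j k kr (conj (ltnW kj) (conj k_gt0 kn)); lia.
have up := reduced_min_letter_gt gen_j red_r jr le_jr asc pj.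
have fix_v : v (u p) = u p by rewrite -vE; apply: (@wprod_fix_hi _ j) => // k /Jrv[].
by rewrite wE permM fix_v.
Qed.

End SymmetricGroup.

Theorem corollary5p6 (n : nat) (w : {perm 'I_n}) (i j : nat) :
  right_almost_reducible w i -> left_almost_reducible w j ->
  i <> j /\ sgen n i * sgen n j = sgen n j * sgen n i.
Proof.
move=> [_ /almost_reducible_right_ltn [[_ iln] right]].
move=> [_ /almost_reducible_left_ltn [[_ jln] left]].
have pt t : (t < n)%N -> {p : 'I_n | (p : nat) = t} by move=> tn; exists (Ordinal tn).
have [a aE] := pt i.-1 (leq_ltn_trans (leq_pred i) iln).
have [b bE] := pt i iln; have [c cE] := pt j.-1 (leq_ltn_trans (leq_pred j) jln).
have [d dE] := pt j jln; have := right a b aE bE; have := left c d cE dE.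
have same (p q : 'I_n) : (p : nat) = q -> (w p : nat) = w q by move/val_inj->.
have := same a c; have := same b d; have := same b c; have := same a d.
rewrite aE bE cE dE => ad bc bd ac /andP[jc cd] /andP[ab bi].
have far : (i.+1 < j)%N || (j.+1 < i)%N by lia.
by split; [lia | exact: sgen_commute].
Qed.
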